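(* If an LJB-sequent $\Gamma\vdash A$ has a derivation in LJB, then it has a non-redundant derivation, i.e. a derivation in which the same LJB-sequent does not occur twice on the same branch.
   Context: LJB: formulas $A ::= P(t_1,\dots,t_n)\mid A\rightarrow A\mid\forall x\,A$ with first-order terms. An LJB-context is a finite multiset of items; an item is a formula or $[\Gamma]_V$ ($V$ a finite set of variables bound by the bracket, $\Gamma$ an LJB-context); $FV([\Gamma]_V)=FV(\Gamma)\setminus V$. An LJB-sequent is $\Gamma\vdash A$ with $\Gamma$ an LJB-context and $A$ a formula. Cleaning rules (anywhere in a context): $[I,\Gamma]_V\longrightarrow I,[\Gamma]_V$ if $FV(I)\cap V=\emptyset$; $[\ ]_V\longrightarrow\emptyset$; $I\,I\longrightarrow I$; $\Gamma{\downarrow}$ is the normal form for a fixed strategy. LJB rules apply only to LJB-sequents with normal context in which, in each formula, bound variables are distinct and distinct from free variables; formulas are not identified modulo $\alpha$. Rules: (L$\rightarrow$) from $\Gamma'\vdash A_1,\dots,\Gamma'\vdash A_n$ infer $\Gamma\vdash P$, where $\Gamma=\Gamma_1,[\Gamma_2,[\dots\Gamma_{i-1},[\Gamma_i, A_1\rightarrow\dots\rightarrow A_n\rightarrow P]_{V_{i-1}}\dots]_{V_2}]_{V_1}$ ($i\ge1$), $\Gamma'=([\dots[[\Gamma_1]_{V_1},\Gamma_2]_{V_2},\dots,\Gamma_{i-1}]_{V_{i-1}},\Gamma_i,A_1\rightarrow\dots\rightarrow A_n\rightarrow P){\downarrow}$, $P$ atomic with no free variable in $V_1\cup\dots\cup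 V_{i-1}$; (R$\forall$) from $[\Gamma]_V{\downarrow}\vdash A$ infer $\Gamma\vdash\forall x\,A$, $V$ the set of all variables bound in $\forall x\,A$; (R$\rightarrow$) from $(\Gamma,A){\downarrow}\vdash B$ infer $\Gamma\vdash A\rightarrow B$. *)

From Stdlib Require Import List Permutation.
Import ListNotations.

Definition var := nat.

Inductive term : Type :=
| TVar : var -> term
| TFun : nat -> list term -> term.

Inductive form : Type :=
| Atom : nat -> list term -> form
| Imp : form -> form -> form
| All : var -> form -> form.

Fixpoint fv_term (t : term) : list var :=
  match t with
  | TVar x => [x]
  | TFun _ ts => flat_map fv_term ts
  end.

Fixpoint fv_form (A : form) : list var :=
  match A with
  | Atom _ ts => flat_map fv_term ts
  | Imp A B => fv_form A ++ fv_form B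
  | All x A => filter (fun y => negb (Nat.eqb y x)) (fv_form A)
  end.

Fixpoint bv_form (A : form) : list var :=
  match A with
  | Atom _ _ => []
  | Imp A B => bv_form A ++ bv_form B
  | All x A => x :: bv_form A
  end.

Definition wf_form (A : form) : Prop :=
  NoDup (bv_form A) /\ (forall x, In x (bv_form A) -> ~ In x (fv_form A)).

(** Items: a formula, or a bracket [Gamma]_V.  An LJB-context is a finite
    multiset of items, represented by a list taken modulo [ctx_eq]. *)
Inductive item : Type :=
| IF : form -> item
| IB : list var -> list item -> item.

Definition ctx := list item.

Fixpoint fv_item (I : item) : list var :=
  match I with
  | IF A => fv_form A
  | IB V G => filter (fun y => negb (existsb (Nat.eqb y) V)) (flat_map fv_item G)
  end.

Definition fv_ctx (G : ctx) : list var := flat_map fv_item G.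

Fixpoint forms_item (I : item) : list form :=
  match I with
  | IF A => [A]
  | IB V G => flat_map forms_item G
  end.

Definition forms_ctx (G : ctx) : list form := flat_map forms_item G.

(** Equality of items / contexts as (nested) multisets, V as finite sets. *)
Inductive item_eq : item -> item -> Prop :=
| ieq_form : forall A, item_eq (IF A) (IF A)
| ieq_br : forall V V' G G' G'',
    (forall x, In x V <-> In x V') ->
    Permutation G G'' -> Forall2 item_eq G'' G' ->
    item_eq (IB V G) (IB V' G').

Definition ctx_eq (G G' : ctx) : Prop :=
  exists G'', Permutation G G'' /\ Forall2 item_eq G'' G'.

Definition sequent : Type := (ctx * form)%type.

Definition seq_eq (s s' : sequent) : Prop :=
  ctx_eq (fst s) (fst s') /\ snd s = snd s'.

Definition disjoint (l1 l2 : list var) : Prop := forall x, In x l1 -> ~ In x l2.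

Inductive clean_step : ctx -> ctx -> Prop :=
| cs_out : forall G1 G2 V H1 H2 I,
    disjoint (fv_item I) V ->
    clean_step (G1 ++ IB V (H1 ++ I :: H2) :: G2) (G1 ++ I :: IB V (H1 ++ H2) :: G2)
| cs_empty : forall G1 G2 V,
    clean_step (G1 ++ IB V [] :: G2) (G1 ++ G2)
| cs_dup : forall G1 G2 G3 I J,
    item_eq I J ->
    clean_step (G1 ++ I :: G2 ++ J :: G3) (G1 ++ I :: G2 ++ G3)
| cs_in : forall G1 G2 V H H',
    clean_step H H' ->
    clean_step (G1 ++ IB V H :: G2) (G1 ++ IB V H' :: G2).

Inductive clean_star : ctx -> ctx -> Prop :=
| cst_eq : forall G G', ctx_eq G G' -> clean_star G G'
| cst_step : forall G G' G'', clean_step G G' -> clean_star G' G'' -> clean_star G G''.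

Definition normal (G : ctx) : Prop := forall G', ~ clean_step G G'.

(** [nf] is a normalisation function for a fixed strategy: it computes a
    cleaning normal form and is a function of the multiset. *)
Definition is_nf_strategy (nf : ctx -> ctx) : Prop :=
  (forall G, clean_star G (nf G)) /\
  (forall G, normal (nf G)) /\
  (forall G G', ctx_eq G G' -> ctx_eq (nf G) (nf G')).

(** Gamma_1,[Gamma_2,[ ... Gamma_{i-1},[last]_{V_{i-1}} ...]_{V_2}]_{V_1}
    where L = [(Gamma_1,V_1); ...; (Gamma_{i-1},V_{i-1})]. *)
Fixpoint build_conc (L : list (ctx * list var)) (last : ctx) : ctx :=
  match L with
  | [] => last
  | (G, V) :: rest => G ++ [IB V (build_conc rest last)]
  end.

(** [ ... [[Gamma_1]_{V_1}, Gamma_2]_{V_2}, ..., Gamma_{i-1}]_{V_{i-1}}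
    (empty when i = 1). *)
Fixpoint unwind (acc : ctx) (L : list (ctx * list var)) : ctx :=
  match L with
  | [] => acc
  | (G, V) :: rest => unwind [IB V (acc ++ G)] rest
  end.

Inductive ljb_rule (nf : ctx -> ctx) : list sequent -> sequent -> Prop :=
| r_L_imp : forall (L : list (ctx * list var)) (Gi : ctx) (As : list form)
                   (p : nat) (ts : list term),
    (forall V x, In V (map snd L) -> In x V -> ~ In x (fv_form (Atom p ts))) ->
    ljb_rule nf
      (map (fun A => (nf (unwind [] L ++ Gi ++ [IF (fold_right Imp (Atom p ts) As)]), A)) As)
      (build_conc L (Gi ++ [IF (fold_right Imp (Atom p ts) As)]), Atom p ts)
| r_R_all : forall (G : ctx) (x : var) (A : form),
    ljb_rule nf [(nf [IB (bv_form (All x A)) G], A)] (G, All x A)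
| r_R_imp : forall (G : ctx) (A B : form),
    ljb_rule nf [(nf (G ++ [IF A]), B)] (G, Imp A B).

Definition applicable (s : sequent) : Prop :=
  normal (fst s) /\ Forall wf_form (forms_ctx (fst s)) /\ wf_form (snd s).

Definition rule_inst (nf : ctx -> ctx) (prems : list sequent) (concl : sequent) : Prop :=
  applicable concl /\
  exists prems0 concl0,
    ljb_rule nf prems0 concl0 /\ Forall2 seq_eq prems prems0 /\ seq_eq concl concl0.

Inductive tree : Type := Node : sequent -> list tree -> tree.

Definition root (t : tree) : sequent := match t with Node s _ => s end.

Inductive derivation (nf : ctx -> ctx) : tree -> Prop :=
| der_node : forall s ts,
    rule_inst nf (map root ts) s -> Forall (derivation nf) ts ->
    derivation nf (Node s ts).

(** No sequent occurs twice on the same branch; [anc] are the sequents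
    strictly below the current node on its branch. *)
Inductive nonredundant_from : list sequent -> tree -> Prop :=
| nr_node : forall anc s ts,
    (forall s', In s' anc -> ~ seq_eq s' s) ->
    Forall (nonredundant_from (s :: anc)) ts ->
    nonredundant_from anc (Node s ts).

Definition nonredundant (t : tree) : Prop := nonredundant_from [] t.

(** A derivation of minimal size is non-redundant.  Suppose a sequent [s]
    reoccurs, up to [seq_eq], at a node [l] above it on a branch.  Rule
    instances are read modulo [seq_eq], which is transitive, so the
    subderivation rooted at [l], relabelled with [s], is a strictly smaller
    derivation of [s]; and a subderivation of a minimal derivation is again
    minimal, since it can be replaced by any derivation of the same sequent. *)

From Stdlib Require Import List Permutation Classical Lia.
Import ListNotations.

Lemma Forall2_Permutation_r {A B} {R : A -> B -> Prop} {l1 l2 l3} :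
  Forall2 R l1 l2 -> Permutation l2 l3 ->
  exists l4, Permutation l1 l4 /\ Forall2 R l4 l3.
Proof.
  intros F P.
  destruct (Permutation_Forall2 P (Forall2_flip F)) as [l4 [P4 F4]].
  exists l4; split; [exact P4 | exact (Forall2_flip F4)].
Qed.

Lemma Forall2_trans_in {A B C} {R : A -> B -> Prop} {S : B -> C -> Prop}
    {T : A -> C -> Prop} {l1 l2 l3} :
  (forall x y z, In x l1 -> R x y -> S y z -> T x z) ->
  Forall2 R l1 l2 -> Forall2 S l2 l3 -> Forall2 T l1 l3.
Proof.
  intros HT F12; revert l3 HT.
  induction F12 as [|x y l1 l2 Rxy _ IH]; intros l3 HT F23;
    inversion F23 as [|y' z l2' l3' Syz F]; subst; constructor.
  - exact (HT x y z (or_introl eq_refl) Rxy Syz).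
  - apply IH; [intros u v w Hu; apply HT; right; exact Hu | exact F].
Qed.

Fixpoint item_nested_ind (P : item -> Prop)
    (HF : forall A, P (IF A)) (HB : forall V G, Forall P G -> P (IB V G))
    (I : item) : P I :=
  match I with
  | IF A => HF A
  | IB V G =>
      HB V G ((fix go (G : ctx) : Forall P G :=
                 match G with
                 | [] => Forall_nil P
                 | J :: G' => Forall_cons J (item_nested_ind P HF HB J) (go G')
                 end) G)
  end.

Lemma item_eq_trans x y z : item_eq x y -> item_eq y z -> item_eq x z.
Proof.
  revert y z; induction x as [A | V G IH] using item_nested_ind; intros y z Exy Eyz.
  - inversion Exy; subst; exact Eyz.
  - inversion Exy as [|V0 V' G0 G' Ga HV PGa FGa]; subst.
    inversion Eyz as [|V0 V'' G0 G'' Gb HV' PGb FGb]; subst.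
    destruct (Forall2_Permutation_r FGa PGb) as [Gc [PGc FGc]].
    assert (PG : Permutation G Gc) by exact (perm_trans PGa PGc).
    econstructor; [intro x; rewrite HV, HV'; reflexivity | exact PG |].
    refine (Forall2_trans_in _ FGc FGb).
    intros u v w Hu; apply (proj1 (Forall_forall _ _) IH u).
    exact (Permutation_in _ (Permutation_sym PG) Hu).
Qed.

Lemma ctx_eq_trans {G1 G2 G3} : ctx_eq G1 G2 -> ctx_eq G2 G3 -> ctx_eq G1 G3.
Proof.
  intros [H1 [P1 F1]] [H2 [P2 F2]].
  destruct (Forall2_Permutation_r F1 P2) as [H3 [P3 F3]].
  exists H3; split; [exact (perm_trans P1 P3) |].
  exact (Forall2_trans_in (fun x y z _ => @item_eq_trans x y z) F3 F2).
Qed.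

Lemma seq_eq_trans {s1 s2 s3} : seq_eq s1 s2 -> seq_eq s2 s3 -> seq_eq s1 s3.
Proof.
  intros [C12 F12] [C23 F23]; split; [exact (ctx_eq_trans C12 C23) | congruence].
Qed.

Fixpoint tree_nested_ind (P : tree -> Prop)
    (HN : forall s ts, Forall P ts -> P (Node s ts)) (t : tree) : P t :=
  match t with
  | Node s ts =>
      HN s ts ((fix go (ts : list tree) : Forall P ts :=
                  match ts with
                  | [] => Forall_nil P
                  | u :: ts' => Forall_cons u (tree_nested_ind P HN u) (go ts')
                  end) ts)
  end.

Fixpoint tsize (t : tree) : nat :=
  match t with Node _ ts => S (list_sum (map tsize ts)) end.

Fixpoint labels (t : tree) : list sequent :=
  match t with Node s ts => s :: flat_map labels ts end.

Lemma tsize_child {s ts c} : In c ts -> tsize c < tsize (Node s ts).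
Proof.
  intro Hc; simpl; induction ts as [|u ts IH]; [destruct Hc |].
  destruct Hc as [-> | Hc]; simpl; [lia | specialize (IH Hc); lia].
Qed.

Section Pruning.

Variable nf : ctx -> ctx.

Lemma derivation_inv s ts : derivation nf (Node s ts) ->
  rule_inst nf (map root ts) s /\ Forall (derivation nf) ts.
Proof. intro D; inversion D; split; assumption. Qed.

Lemma derivation_subtree {t l} : derivation nf t -> In l (labels t) ->
  exists u, derivation nf u /\ root u = l /\ tsize u <= tsize t.
Proof.
  revert l; induction t as [s ts IH] using tree_nested_ind; intros l D [<- | Hl].
  - exists (Node s ts); auto.
  - apply derivation_inv in D as [_ Ds].
    apply in_flat_map in Hl as [c [Hc Hl]].
    destruct (proj1 (Forall_forall _ _) IH c Hc l (proj1 (Forall_forall _ _) Ds c Hc) Hl)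
      as [u [Du [Ru Su]]].
    pose proof (tsize_child (s := s) Hc).
    exists u; repeat split; [exact Du | exact Ru | lia].
Qed.

Lemma derivation_relabel {s l ts} : derivation nf (Node l ts) -> seq_eq s l ->
  applicable s -> derivation nf (Node s ts).
Proof.
  intros D E A.
  apply derivation_inv in D as [[_ [prems [concl [R [Fp Ec]]]]] Ds].
  constructor; [| exact Ds].
  split; [exact A |].
  exists prems, concl; split; [exact R | split; [exact Fp | exact (seq_eq_trans E Ec)]].
Qed.

Definition minimal_derivation (t : tree) : Prop :=
  derivation nf t /\
  forall u, derivation nf u -> root u = root t -> tsize t <= tsize u.

Lemma minimal_derivation_exists {t} : derivation nf t ->
  exists u, root u = root t /\ minimal_derivation u.
Proof.
  remember (tsize t) as n eqn:Hn; revert t Hn.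
  induction n as [n IH] using Wf_nat.lt_wf_ind; intros t -> D.
  destruct (classic (forall u, derivation nf u -> root u = root t -> tsize t <= tsize u))
    as [Hmin | Hsmaller].
  - exists t; split; [reflexivity | split; assumption].
  - apply not_all_ex_not in Hsmaller as [u Hu].
    apply imply_to_and in Hu as [Du Hu]; apply imply_to_and in Hu as [Ru Hlt].
    destruct (IH (tsize u) ltac:(lia) u eq_refl Du) as [w [Rw Mw]].
    exists w; split; [congruence | exact Mw].
Qed.

Lemma minimal_derivation_child {s ts c} :
  minimal_derivation (Node s ts) -> In c ts -> minimal_derivation c.
Proof.
  intros [D Hmin] Hc.
  apply derivation_inv in D as [R Ds].
  split; [exact (proj1 (Forall_forall _ _) Ds c Hc) |].
  intros u Du Ru.
  destruct (in_split c ts Hc) as [ts1 [ts2 ->]].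
  assert (Hroots : map root (ts1 ++ u :: ts2) = map root (ts1 ++ c :: ts2))
    by (rewrite !map_app; simpl; congruence).
  assert (Dreplaced : derivation nf (Node s (ts1 ++ u :: ts2))).
  { constructor; [rewrite Hroots; exact R |].
    apply Forall_app in Ds as [Ds1 Ds2]; inversion Ds2; subst.
    apply Forall_app; split; [exact Ds1 | constructor; assumption]. }
  specialize (Hmin _ Dreplaced eq_refl); simpl in Hmin.
  rewrite !map_app, !list_sum_app in Hmin; simpl in Hmin; lia.
Qed.

Lemma minimal_derivation_no_repeat {s ts l} :
  minimal_derivation (Node s ts) -> In l (flat_map labels ts) -> ~ seq_eq s l.
Proof.
  intros [D Hmin] Hl E.
  apply derivation_inv in D as [[A _] Ds].
  apply in_flat_map in Hl as [c [Hc Hl]].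
  destruct (derivation_subtree (proj1 (Forall_forall _ _) Ds c Hc) Hl)
    as [[l' us] [Du [Ru Su]]]; simpl in Ru; subst l'.
  specialize (Hmin _ (derivation_relabel Du E A) eq_refl).
  pose proof (tsize_child (s := s) Hc); simpl in *; lia.
Qed.

Lemma minimal_derivation_nonredundant_from t anc : minimal_derivation t ->
  (forall a l, In a anc -> In l (labels t) -> ~ seq_eq a l) ->
  nonredundant_from anc t.
Proof.
  revert anc; induction t as [s ts IH] using tree_nested_ind; intros anc M Hanc.
  constructor.
  - intros a Ha; apply Hanc; [exact Ha | left; reflexivity].
  - apply Forall_forall; intros c Hc.
    apply (proj1 (Forall_forall _ _) IH c Hc); [exact (minimal_derivation_child M Hc) |].
    intros a l [<- | Ha] Hl.
    + apply (minimal_derivation_no_repeat M), in_flat_map; eauto.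
    + apply Hanc; [exact Ha | right; apply in_flat_map; eauto].
Qed.

End Pruning.

Theorem proposition14 :
  forall (nf : ctx -> ctx), is_nf_strategy nf ->
  forall (G : ctx) (A : form),
    (exists t, derivation nf t /\ root t = (G, A)) ->
    exists t, derivation nf t /\ root t = (G, A) /\ nonredundant t.
Proof.
  (* The pruning works for any [nf]. *)
  intros nf _ G A [t [D Rt]].
  destruct (minimal_derivation_exists nf D) as [u [Ru Mu]].
  exists u; repeat split.
  - exact (proj1 Mu).
  - congruence.
  - apply (minimal_derivation_nonredundant_from nf); [exact Mu | intros a l []].
Qed.
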